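(* Let $q\ge 3$ be a prime power and $k$ a positive integer. Then there exists an $[n,k]_q$ MWS code for some positive integer $n$.
   Context: An $[n,k]_q$ code is a $k$-dimensional $\mathbb{F}_q$-linear subspace $\mathcal{C}$ of $\mathbb{F}_q^n$ with the Hamming weight $w(c)=|\{i: c_i\neq 0\}|$. Standing convention: codes of dimension $k\ge 2$ are non-degenerate, i.e. no coordinate position is identically zero on $\mathcal{C}$. The weight set is $w(\mathcal{C})=\{w(c): c\in\mathcal{C}\setminus\{0\}\}$, and $\theta_q(k-1)=\frac{q^k-1}{q-1}$. $\mathcal{C}$ is a maximum weight spectrum (MWS) code if $|w(\mathcal{C})|=\theta_q(k-1)$. *)

From HB Require Import structures.
From mathcomp Require Import all_boot all_order all_algebra.
Set Implicit Arguments. Unset Strict Implicit. Unset Printing Implicit Defensive.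
Import GRing.Theory.
Local Open Scope ring_scope.

Definition hweight (F : finFieldType) (n : nat) (c : 'rV[F]_n) : nat :=
  #|[set i : 'I_n | c 0 i != 0]|.

Definition weight_set (F : finFieldType) (n : nat) (C : {vspace 'rV[F]_n}) : seq nat :=
  undup [seq hweight c | c <- enum [set c : 'rV[F]_n | (c \in C) && (c != 0)]].

Definition nondegenerate (F : finFieldType) (n : nat) (C : {vspace 'rV[F]_n}) : Prop :=
  forall i : 'I_n, exists2 c : 'rV[F]_n, c \in C & c 0 i != 0.

(* theta_q(k-1) = (q^k - 1)/(q - 1). *)
Definition theta (q k : nat) : nat := ((q ^ k - 1) %/ (q - 1))%N.

Definition MWS_code (F : finFieldType) (n k : nat) (C : {vspace 'rV[F]_n}) : Prop :=
  [/\ \dim C = k, (2 <= k)%N -> nondegenerate C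
    & size (weight_set C) = theta #|F| k].

From Pilot Require Import Defs.
From mathcomp Require Import all_boot all_order all_algebra.
From mathcomp Require Import zify.
Set Implicit Arguments. Unset Strict Implicit. Unset Printing Implicit Defensive.
Import GRing.Theory.
Local Open Scope ring_scope.

(* Fix an enumeration of F^k and take as columns of a generator matrix every
   nonzero v in F^k, repeated 2^(rank v) times.  The weight of the codeword
   u G is then the sum of 2^(rank v) over the v with u.v <> 0, i.e. the binary
   code of the complement of the hyperplane orthogonal to u.  That set
   determines u up to a nonzero scalar, so the nonzero codewords have exactly
   one weight per projective point: (q^k - 1)/(q - 1) weights. *)

Lemma bitsum_inj N (b c : 'I_N -> bool) :
  (\sum_(i < N) b i * 2 ^ i = \sum_(i < N) c i * 2 ^ i)%N -> b =1 c.
Proof.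
elim: N b c => [|N IH] b c eq_bc i; first by case: i.
have sumE (d : 'I_N.+1 -> bool) : (\sum_(i < N.+1) d i * 2 ^ i =
    d ord0 + 2 * \sum_(i < N) d (lift ord0 i) * 2 ^ i)%N.
  rewrite big_ord_recl expn0 muln1 big_distrr /=; congr (_ + _)%N.
  by apply: eq_bigr => j _; rewrite /= /bump /= expnS; lia.
rewrite !sumE in eq_bc.
have bc0 : b ord0 = c ord0 by move: eq_bc; case: (b ord0); case: (c ord0) => /=; lia.
rewrite bc0 in eq_bc.
have {}eq_bc : (\sum_(i < N) b (lift ord0 i) * 2 ^ i =
                \sum_(i < N) c (lift ord0 i) * 2 ^ i)%N by lia.
by case: (unliftP ord0 i) => [j ->|->] //; apply: IH eq_bc j.
Qed.

Definition bincode (T : finType) (X : {set T}) : nat :=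
  \sum_(x in X) 2 ^ enum_rank x.

Lemma bincodeE (T : finType) (X : {set T}) :
  bincode X = (\sum_(i < #|T|) (enum_val i \in X) * 2 ^ i)%N.
Proof.
rewrite /bincode big_mkcond (big_enum_val (A := T)) /=.
by apply: eq_bigr => i _; rewrite enum_valK; case: (enum_val i \in X); rewrite ?mul1n.
Qed.

Lemma bincode_inj (T : finType) : injective (@bincode T).
Proof.
move=> X Y; rewrite !bincodeE => /bitsum_inj eqXY.
by apply/setP => x; rewrite -(enum_rankK x) eqXY.
Qed.

Lemma bincode0 (T : finType) : bincode (set0 : {set T}) = 0%N.
Proof. by rewrite /bincode big_pred0 // => x; rewrite inE. Qed.

Section Dot.
Variables (R : comNzRingType) (k : nat).
Implicit Types (u v : 'rV[R]_k).

Definition dot u v : R := (u *m v^T) 0 0.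

Lemma dot_delta u j : dot u (delta_mx 0 j) = u 0 j.
Proof. by rewrite /dot trmx_delta -colE mxE. Qed.

Lemma delta_dot v j : dot (delta_mx 0 j) v = v 0 j.
Proof. by rewrite /dot -rowE !mxE. Qed.

Lemma dotZl a u v : dot (a *: u) v = a * dot u v.
Proof. by rewrite /dot -scalemxAl mxE. Qed.

Lemma dotBZr u a b v w : dot u (a *: v - b *: w) = a * dot u v - b * dot u w.
Proof.
by rewrite /dot linearB /= !linearZ /= mulmxDr -!scalemxAr mulmxN !mxE mulrN.
Qed.

Lemma dotr0 u : dot u 0 = 0.
Proof. by rewrite /dot trmx0 mulmx0 mxE. Qed.

End Dot.

Section Nonorth.
Variables (F : finFieldType) (k : nat).
Implicit Types (u v : 'rV[F]_k).

Definition nonorth u : {set 'rV[F]_k} := [set v | dot u v != 0].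

Lemma nonorthZ c u : c != 0 -> nonorth (c *: u) = nonorth u.
Proof. by move=> c_neq0; apply/setP => v; rewrite !inE dotZl mulf_eq0 negb_or c_neq0. Qed.

Lemma nonorth_eq0 u : (nonorth u == set0) = (u == 0).
Proof.
apply/eqP/eqP => [u0|->]; last by apply/setP => v; rewrite !inE -(scale0r 0) dotZl mul0r eqxx.
apply/eqP/negPn/negP => /rV0Pn[i ui_neq0].
by have := in_set0 (delta_mx 0 i : 'rV[F]_k); rewrite -u0 inE dot_delta ui_neq0.
Qed.

Lemma nonorth_eq_scale u u' :
  u != 0 -> nonorth u = nonorth u' -> exists2 c, c != 0 & u' = c *: u.
Proof.
move=> /rV0Pn[i ui_neq0] eq_uu'.
have same_zeros v : (dot u v == 0) = (dot u' v == 0).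
  by apply/negb_inj; move/setP: eq_uu' => /(_ v); rewrite !inE.
exists (u' 0 i / u 0 i).
  by rewrite mulf_neq0 ?invr_eq0 // -dot_delta -same_zeros dot_delta.
apply/rowP => j; rewrite mxE.
(* [u 0 i e_j - u 0 j e_i] is orthogonal to [u], hence to [u']. *)
have := same_zeros (u 0 i *: delta_mx 0 j - u 0 j *: delta_mx 0 i).
rewrite !dotBZr !dot_delta [u 0 j * _]mulrC subrr eqxx => /esym/eqP/subr0_eq eq_ij.
by rewrite -[u' 0 j](mulKf ui_neq0) eq_ij mulrCA mulrC [_^-1 * _]mulrC.
Qed.

Lemma card_nonorth_classes :
  #|[set nonorth u | u in [set~ 0]]| = theta #|F| k.
Proof.
have q1_gt0 : (0 < #|F|.-1)%N by rewrite -subn1 subn_gt0 card_finNzRing_gt1.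
suff count : (#|[set nonorth u | u in [set~ 0%R]]| * #|F|.-1 = (#|F| ^ k).-1)%N.
  by rewrite /theta !subn1 -count mulnK.
have := partition_big_imset (aop := addn) nonorth [set~ 0] (fun _ => 1%N).
rewrite sum1_card cardsC1 card_mx mul1n => ->.
rewrite -sum_nat_const; apply: eq_bigr => _ /imsetP[u0 u0_neq0 ->].
have {}u0_neq0 : u0 != 0 by rewrite !inE in u0_neq0.
have scale_inj : injective (fun c : F => c *: u0).
  by move=> c d /eqP; rewrite -subr_eq0 -scalerBl scaler_eq0 (negPf u0_neq0) orbF subr_eq0 => /eqP.
rewrite sum1dep_card -(cardsC1 (0 : F)) -(card_imset _ scale_inj).
apply: eq_card => u; rewrite !inE; apply/imsetP/idP.
  case=> c; rewrite !inE => c_neq0 ->.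
  by rewrite scaler_eq0 negb_or c_neq0 u0_neq0 nonorthZ // eqxx.
case/andP=> u_neq0 /eqP eq_u.
by have [c c_neq0 ->] := nonorth_eq_scale u0_neq0 (esym eq_u); exists c; rewrite ?inE.
Qed.

End Nonorth.

Section RepeatedColumns.
Variables (F : finFieldType) (k : nat) (mult : 'rV[F]_k -> nat).

Local Notation copy := 'I_(\max_v mult v).

Definition rep_index : {set 'rV[F]_k * copy} :=
  [set x : 'rV[F]_k * copy | (x.2 < mult x.1)%N].
Definition rep_len : nat := #|rep_index|.
Definition rep_col (j : 'I_rep_len) : 'rV[F]_k := (enum_val j).1.
Definition rep_gen : 'M[F]_(k, rep_len) := \matrix_(i, j) rep_col j 0 i.
Definition rep_code : {vspace 'rV[F]_rep_len} := limg (linfun (mulmxr rep_gen)).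

Lemma rep_genE u j : (u *m rep_gen) 0 j = dot u (rep_col j).
Proof. by rewrite /dot !mxE; apply: eq_bigr => i _; rewrite !mxE. Qed.

Lemma card_rep_col (P : pred 'rV[F]_k) :
  #|[set j | P (rep_col j)]| = (\sum_(v | P v) mult v)%N.
Proof.
rewrite -sum1dep_card.
rewrite -(big_enum_val_cond (fun x : 'rV[F]_k * _ => P x.1) (fun _ => 1%N)) /=.
rewrite (eq_bigl (fun x : 'rV[F]_k * copy => P x.1 && (x.2 < mult x.1)%N)); last first.
  by move=> x; rewrite inE andbC.
rewrite -(pair_big_dep P (fun v (t : copy) => (t < mult v)%N) (fun _ _ => 1%N)) /=.
apply: eq_bigr => v _.
by rewrite (big_ord_narrow (leq_bigmax v)) sum1_card card_ord.
Qed.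

Lemma rep_lenE : rep_len = (\sum_v mult v)%N.
Proof. by rewrite -(card_rep_col predT) /= cardsT card_ord. Qed.

Lemma hweight_rep u : hweight (u *m rep_gen) = (\sum_(v in nonorth u) mult v)%N.
Proof.
rewrite /hweight -card_rep_col; apply: eq_card => j.
by rewrite !inE rep_genE.
Qed.

Lemma mem_rep_code c : (c \in rep_code) = [exists u, c == u *m rep_gen].
Proof.
apply/memv_imgP/existsP => [[u _ ->]|[u /eqP ->]]; first by exists u; rewrite lfunE.
by exists u; rewrite ?memvf ?lfunE.
Qed.

(* Qualified: [all_algebra] also exports a [nondegenerate], for forms. *)
Lemma rep_code_nondegenerate : mult 0 = 0%N -> Defs.nondegenerate rep_code.
Proof.
move=> mult0 j.
have /rV0Pn[i col_i_neq0] : rep_col j != 0.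
  have := enum_valP j; rewrite inE /rep_col.
  by apply: contraTneq => ->; rewrite mult0.
exists (delta_mx 0 i *m rep_gen); last by rewrite rep_genE delta_dot.
by rewrite mem_rep_code; apply/existsP; exists (delta_mx 0 i).
Qed.

Hypothesis rep_gen_inj : injective (fun u : 'rV[F]_k => u *m rep_gen).

Lemma dim_rep_code : \dim rep_code = k.
Proof.
rewrite /rep_code limg_dim_eq; first by rewrite dimvf dim_matrix; apply: mul1n.
by rewrite capfv; apply/eqP/lker0P => x y; rewrite !lfunE; apply: rep_gen_inj.
Qed.

Lemma weight_set_rep_code :
  weight_set rep_code =i [seq hweight (u *m rep_gen) | u in [set~ 0]].
Proof.
move=> w; rewrite mem_undup; apply/mapP/mapP => [[c]|[u]].
  rewrite mem_enum inE mem_rep_code => /andP[/existsP[u /eqP ->] uG_neq0] ->.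
  exists u => //; rewrite mem_enum !inE.
  by apply: contraNneq uG_neq0 => ->; rewrite mul0mx.
rewrite mem_enum !inE => u_neq0 ->; exists (u *m rep_gen) => //.
rewrite mem_enum inE mem_rep_code; apply/andP; split; first by apply/existsP; exists u.
by apply: contra u_neq0 => /eqP uG0; apply/eqP/rep_gen_inj; rewrite /= uG0 mul0mx.
Qed.

End RepeatedColumns.

Lemma hweight0 (F : finFieldType) n : hweight (0 : 'rV[F]_n) = 0%N.
Proof. by apply/eqP; rewrite cards_eq0; apply/eqP/setP => j; rewrite !inE mxE eqxx. Qed.

Section PowerOfTwoColumns.
Variables (F : finFieldType) (k : nat).

Definition pow2_mult (v : 'rV[F]_k) : nat := (v != 0) * 2 ^ enum_rank v.

Local Notation G := (rep_gen pow2_mult).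

Lemma hweight_pow2 u : hweight (u *m G) = bincode (nonorth u).
Proof.
rewrite hweight_rep /bincode; apply: eq_bigr => v; rewrite inE /pow2_mult => uv_neq0.
suff -> : v != 0 by rewrite mul1n.
by apply: contraNneq uv_neq0 => ->; rewrite dotr0.
Qed.

Lemma pow2_gen_inj : injective (fun u : 'rV[F]_k => u *m G).
Proof.
move=> u u' /= eq_uu'; apply/eqP; rewrite -subr_eq0 -nonorth_eq0; apply/eqP/bincode_inj.
by rewrite -hweight_pow2 bincode0 mulmxBl eq_uu' subrr hweight0.
Qed.

Lemma size_weight_set_pow2 : size (weight_set (rep_code pow2_mult)) = theta #|F| k.
Proof.
have weightsE : weight_set (rep_code pow2_mult) =i
    [seq bincode X | X in [set nonorth u | u in [set~ 0 : 'rV[F]_k]]].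
  move=> w; rewrite (weight_set_rep_code pow2_gen_inj).
  apply/mapP/mapP => [[u]|[X]]; rewrite mem_enum.
    by move=> u_neq0 ->; exists (nonorth u); rewrite ?mem_enum ?imset_f ?hweight_pow2.
  by move=> /imsetP[u u_neq0 ->] ->; exists u; rewrite ?mem_enum ?hweight_pow2.
rewrite -card_nonorth_classes cardE -(size_map (@bincode _)).
apply/perm_size/uniq_perm => //; first exact: undup_uniq.
by rewrite map_inj_uniq ?enum_uniq //; apply: bincode_inj.
Qed.

Lemma rep_len_pow2_gt0 : (0 < k)%N -> (0 < rep_len pow2_mult)%N.
Proof.
move=> k_gt0; set e : 'rV[F]_k := delta_mx 0 (Ordinal k_gt0).
have e_neq0 : e != 0 by apply/rV0Pn; exists (Ordinal k_gt0); rewrite mxE !eqxx oner_eq0.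
rewrite rep_lenE (bigD1 e) //= {1}/pow2_mult e_neq0 mul1n.
by rewrite ltn_addr // expn_gt0.
Qed.

End PowerOfTwoColumns.

Theorem MWS_code_exists (F : finFieldType) (k : nat) : (0 < k)%N ->
  exists n : nat, (0 < n)%N /\ exists C : {vspace 'rV[F]_n}, MWS_code k C.
Proof.
move=> k_gt0; exists (rep_len (@pow2_mult F k)); split; first exact: rep_len_pow2_gt0.
exists (rep_code (@pow2_mult F k)); split.
- exact/dim_rep_code/pow2_gen_inj.
- by move=> _; apply: rep_code_nondegenerate; rewrite /pow2_mult eqxx.
- exact: size_weight_set_pow2.
Qed.

Local Close Scope ring_scope.

Theorem mainTheorem2 (q : nat)
  (hq : exists p e : nat, [/\ prime p, (0 < e)%N & q = p ^ e])
  (hq3 : (3 <= q)%N)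
  (F : finFieldType) (hF : #|F| = q)
  (k : nat) (hk : (0 < k)%N) :
  exists n : nat, (0 < n)%N /\ exists C : {vspace 'rV[F]_n}, @MWS_code F n k C.
Proof. exact: MWS_code_exists hk. Qed.
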